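(* Let $X_1,X_2$ be weakly regular random variables, and for $i=1,2$ let $f_i$ be the density of $X_i$, $G_i(t)=\mathbb{P}[X_i\ge t]$, $H_i(t)=\int_0^tG_i(u)\,\mathrm{d}u$, $r_i=\sup_{p\ge0}p\,\mathbb{P}[X_i\ge p]$, and $K_1(t)=f_2(t)(H_1(t)-r_1)-G_1(t)G_2(t)$, $K_2(t)=f_1(t)(H_2(t)-r_2)-G_1(t)G_2(t)$. Then for $i=1,2$ and all $u\ge0$: if $K_i(u)>0$ then $K_i(v)\ge0$ for all $v>u$.
   Context: A random variable $X\ge0$ is weakly regular if its support is an interval $[\alpha,\beta]$ with $0\le\alpha<\beta\le\infty$ (meaning $[\alpha,\infty)$ if $\beta=\infty$), on which it has a positive continuous density $f$ (and density $0$ outside), such that the virtual valuation $t-G(t)/f(t)$ is nondecreasing on the support, where $G(t)=\mathbb{P}[X\ge t]$. *)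

From HB Require Import structures.
From mathcomp Require Import all_boot all_order all_algebra.
From mathcomp Require Import all_classical all_reals all_analysis.
Set Implicit Arguments. Unset Strict Implicit. Unset Printing Implicit Defensive.
Import Order.TTheory GRing.Theory Num.Theory.
Import numFieldNormedType.Exports.
Local Open Scope classical_set_scope.
Local Open Scope ring_scope.

Section Defs.
Context {R : realType} {d : measure_display} {T : measurableType d}
  (P : probability T R).

(* the support interval [alpha, beta] (= [alpha, +oo) when beta = +oo) *)
Definition supp_int (alpha : R) (beta : \bar R) : set R :=
  [set x : R | alpha <= x /\ (x%:E <= beta)%E].

Definition tailG (X : T -> R) (t : R) : R := fine (P [set w | t <= X w]).

Definition is_density (X : {RV P >-> R}) (f : R -> R) : Prop :=
  forall A : set R, measurable A ->
    P (X @^-1` A) = (\int[lebesgue_measure]_(x in A) (f x)%:E)%E.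

Definition weakly_regular (X : {RV P >-> R}) (f : R -> R) : Prop :=
  (forall w, 0 <= X w) /\
  exists (alpha : R) (beta : \bar R),
    [/\ 0 <= alpha, (alpha%:E < beta)%E, is_density X f,
        {within supp_int alpha beta, continuous f} &
        [/\ (forall x, supp_int alpha beta x -> 0 < f x),
        (forall x, ~ supp_int alpha beta x -> f x = 0) &
        (forall s t, supp_int alpha beta s -> supp_int alpha beta t -> s <= t ->
           s - tailG X s / f s <= t - tailG X t / f t)]].

Definition cumH (X : T -> R) (t : R) : R :=
  Rintegral lebesgue_measure `[0, t] (tailG X).

Definition max_rev (X : T -> R) : R :=
  sup [set p * tailG X p | p in [set p : R | 0 <= p]].

End Defs.

From HB Require Import structures.
From mathcomp Require Import all_boot all_order all_algebra.
From mathcomp Require Import all_classical all_reals all_analysis.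
From mathcomp Require Import ring lra measurable_realfun.
Import Order.TTheory GRing.Theory Num.Theory.
Import numFieldNormedType.Exports.
Local Open Scope classical_set_scope.
Local Open Scope ring_scope.

(* On the support of X_a the quantity K = f_a (H_b - r) - G_b G_a factors as
   f_a (H_b - r - G_b phi) with phi = G_a / f_a the inverse hazard rate.
   Weak regularity says phi(v) <= phi(u) + (v - u), and H_b grows by at least
   (v - u) G_b(v) from u to v, so the bracket is nondecreasing: once positive,
   it stays positive.  Left of the support K = -G_a G_b <= 0, and right of it
   f_a = G_a = 0, so K = 0. *)

Section TailFunction.
Context {R : realType} {d : measure_display} {T : measurableType d}
  {P : probability T R} (X : {RV P >-> R}).

Lemma tailG_preimage t : [set w | t <= X w] = X @^-1` `[t, +oo[.
Proof. by apply/seteqP; split => w /=; rewrite in_itv /= andbT. Qed.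

Lemma measurable_tailG_set t : measurable [set w | t <= X w].
Proof.
by rewrite tailG_preimage; apply: measurable_funPTI; exact: measurable_itv.
Qed.

Lemma tailG_ge0 t : 0 <= tailG P X t.
Proof. by rewrite /tailG fine_ge0. Qed.

Lemma tailG_le1 t : tailG P X t <= 1.
Proof.
rewrite /tailG -lee_fin fineK ?fin_num_measure ?probability_le1 //;
  exact: measurable_tailG_set.
Qed.

Lemma tailG_nonincr : {homo tailG P X : s t /~ s <= t}.
Proof.
move=> s t st; rewrite /tailG fine_le ?fin_num_measure //;
  try exact: measurable_tailG_set.
apply: le_measure; rewrite ?inE; try exact: measurable_tailG_set.
by move=> w /= tw; exact: le_trans st tw.
Qed.

Lemma tailG_eq0 {f v} : is_density X f -> (forall x, v <= x -> f x = 0) ->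
  tailG P X v = 0.
Proof.
move=> dens f0; rewrite /tailG tailG_preimage dens ?measurable_itv //.
by rewrite integral0_eq // => x; rewrite /= in_itv /= andbT => /f0 ->.
Qed.

Lemma integrable_tailG (a b : R) (ba bb : bool) :
  lebesgue_measure.-integrable [set` Interval (BSide ba a) (BSide bb b)]
    (EFin \o tailG P X).
Proof.
apply: measurable_bounded_integrable => //.
- by rewrite /= lebesgue_measure_itv; case: ifP => // _; rewrite -EFinD ltry.
- by apply: nonincreasing_measurable => // x y; exact: tailG_nonincr.
- exists 1; split => // M M1 x _ /=.
  by rewrite ger0_norm ?tailG_ge0 // (le_trans (tailG_le1 x)) ?ltW.
Qed.

Lemma cumH_increment_ge s t : 0 <= s -> s <= t ->
  (t - s) * tailG P X t <= cumH P X t - cumH P X s.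
Proof.
move=> s0 st; rewrite /cumH (@Rintegral_itvB _ _ (BLeft 0) (BRight t) s);
  rewrite ?bnd_simp ?integrable_tailG //.
have -> : (t - s) * tailG P X t =
    Rintegral lebesgue_measure `]s, t] (cst (tailG P X t)).
  rewrite Rintegral_cst //= lebesgue_measure_itv /= lte_fin.
  case: ltgtP st => // [ts|<-] _; first by rewrite -EFinD /= mulrC.
  by rewrite subrr mul0r mulr0.
apply: le_Rintegral => //; [|apply: integrable_tailG|].
- apply: measurable_bounded_integrable => //.
    by rewrite /= lebesgue_measure_itv; case: ifP => // _; rewrite -EFinD ltry.
  by exists `|tailG P X t|; split => // M M1 x _ /=; exact: ltW.
- by move=> x /=; rewrite in_itv /= => /andP[_]; exact: tailG_nonincr.
Qed.

Lemma cumH_subMtail_le {u v a b} : 0 <= u -> u <= v -> 0 <= a ->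
  b <= a + (v - u) ->
  cumH P X u - tailG P X u * a <= cumH P X v - tailG P X v * b.
Proof.
move=> u0 uv a0 ba.
have dH := @cumH_increment_ge u v u0 uv.
have dG : tailG P X v <= tailG P X u := tailG_nonincr _ _ uv.
have Gv_b : tailG P X v * b <= tailG P X v * (a + (v - u)).
  by rewrite ler_wpM2l ?tailG_ge0.
have Gv_a : tailG P X v * a <= tailG P X u * a by rewrite ler_wpM2r.
lra.
Qed.

End TailFunction.

Lemma supp_int_right {R : realType} (alpha : R) beta u v x :
  supp_int alpha beta u -> u <= v -> ~ supp_int alpha beta v ->
  v <= x -> ~ supp_int alpha beta x.
Proof.
move=> [au _] uv Nsv vx [_ xb]; apply: Nsv; split; first exact: le_trans uv.
by apply: le_trans xb; rewrite lee_fin.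
Qed.

Lemma weakly_regular_crossing {R : realType} {d : measure_display}
    {T : measurableType d} {P : probability T R} {Xa Xb : {RV P >-> R}}
    {fa : R -> R} (r : R) :
  weakly_regular Xa fa ->
  let K t := fa t * (cumH P Xb t - r) - tailG P Xb t * tailG P Xa t in
  forall u, 0 <= u -> 0 < K u -> forall v, u < v -> 0 <= K v.
Proof.
move=> [_ [alpha [beta [_ _ dens _ [fpos f0 vvalue_homo]]]]] K u u0 Ku v uv.
have [su|Nsu] := pselect (supp_int alpha beta u); last first.
  move: Ku; rewrite /K f0 // mul0r sub0r oppr_gt0 ltNge.
  by rewrite mulr_ge0 ?tailG_ge0.
have [sv|Nsv] := pselect (supp_int alpha beta v); last first.
  have f0v x : v <= x -> fa x = 0.
    by move=> vx; apply: f0; exact: supp_int_right su (ltW uv) Nsv vx.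
  by rewrite /K f0v // (tailG_eq0 Xa dens f0v) mul0r mulr0 subr0.
pose phi t := tailG P Xa t / fa t.
have K_factor t : 0 < fa t ->
    K t = fa t * (cumH P Xb t - r - tailG P Xb t * phi t).
  by move=> ft; rewrite /K /phi; field; rewrite gt_eqF.
move: Ku; rewrite !K_factor ?fpos // pmulr_rgt0 ?fpos // => Lu.
rewrite mulr_ge0 ?ltW ?fpos //.
have phi_step : phi v <= phi u + (v - u).
  by have := vvalue_homo _ _ su sv (ltW uv); rewrite /phi; lra.
have phi_u0 : 0 <= phi u by rewrite divr_ge0 ?tailG_ge0 ?ltW ?fpos.
have := cumH_subMtail_le Xb u0 (ltW uv) phi_u0 phi_step; lra.
Qed.

Theorem lemma3 (R : realType) (d : measure_display) (T : measurableType d)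
  (P : probability T R) (X1 X2 : {RV P >-> R}) (f1 f2 : R -> R) :
  weakly_regular X1 f1 -> weakly_regular X2 f2 ->
  let G1 := tailG P X1 in let G2 := tailG P X2 in
  let K1 := fun t => f2 t * (cumH P X1 t - max_rev P X1) - G1 t * G2 t in
  let K2 := fun t => f1 t * (cumH P X2 t - max_rev P X2) - G1 t * G2 t in
  (forall u : R, 0 <= u -> 0 < K1 u -> forall v : R, u < v -> 0 <= K1 v) /\
  (forall u : R, 0 <= u -> 0 < K2 u -> forall v : R, u < v -> 0 <= K2 v).
Proof.
move=> w1 w2 G1 G2 K1 K2.
have /= cross1 := weakly_regular_crossing (Xb := X1) (max_rev P X1) w2.
have /= cross2 := weakly_regular_crossing (Xb := X2) (max_rev P X2) w1.
split; first exact: cross1.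
move=> u u0 Ku v uv; rewrite /K2 /G1 /G2 (mulrC (tailG P X1 v)).
apply: cross2 u0 _ v uv.
by move: Ku; rewrite /K2 /G1 /G2 (mulrC (tailG P X1 u)).
Qed.
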